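(* Let $A$ be a unital $C^*$-algebra, $N\ge2$, and let $P\in M_{N-1}(A)$ be a submagic matrix. The following are equivalent: (1) $P$ can be completed to a magic matrix $\widetilde P\in M_N(A)$ (i.e. one whose upper-left $(N-1)\times(N-1)$ block is $P$); (2) the elements $P_{iN}=1-\sum_{j=1}^{N-1}P_{ij}$, $i=1,\ldots,N-1$, are pairwise orthogonal projections; (3) the elements $P_{Nj}=1-\sum_{i=1}^{N-1}P_{ij}$, $j=1,\ldots,N-1$, are pairwise orthogonal projections; (4) the element $P_{NN}=\sum_{i,j=1}^{N-1}P_{ij}-(N-2)1$ is a projection.
   Context: A submagic matrix over $A$ is a square matrix whose entries are orthogonal projections ($p=p^2=p^*$), pairwise orthogonal within each row and within each column. It is magic if in addition the entries in each row and in each column sum to $1$. *)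

From HB Require Import structures.
From mathcomp Require Import all_boot all_order all_algebra.
From mathcomp Require Import complex.
From mathcomp Require Import reals.
Set Implicit Arguments. Unset Strict Implicit. Unset Printing Implicit Defensive.
Import Order.TTheory GRing.Theory Num.Theory.
Local Open Scope ring_scope.
Local Open Scope complex_scope.

Definition is_unital_cstar_algebra (R : realType) (A : algType R[i])
    (star : A -> A) (nrm : A -> R) : Prop :=
      (forall x, 0 <= nrm x) /\
      (forall x, nrm x = 0 -> x = 0) /\
      (forall x y, nrm (x + y) <= nrm x + nrm y) /\
      (forall (c : R[i]) x, (nrm (c *: x))%:C = `|c| * (nrm x)%:C) /\
      (forall x y, nrm (x * y) <= nrm x * nrm y) /\
      (forall u : nat -> A,
         (forall e : R, 0 < e -> exists N, forall m n, (N <= m)%N -> (N <= n)%N ->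
             nrm (u m - u n) < e) ->
         exists l : A, forall e : R, 0 < e -> exists N, forall n, (N <= n)%N ->
             nrm (u n - l) < e) /\
      (forall x, star (star x) = x) /\
      (forall x y, star (x + y) = star x + star y) /\
      (forall (c : R[i]) x, star (c *: x) = c^* *: star x) /\
      (forall x y, star (x * y) = star y * star x) /\
      star 1 = 1 /\
      (forall x, nrm (star x * x) = nrm x ^+ 2).

Section Magic.
Variable A : nzRingType.
Variable star : A -> A.

Definition is_proj (p : A) : Prop := p * p = p /\ star p = p.

Definition submagic (n : nat) (P : 'M[A]_n) : Prop :=
  [/\ forall i j, is_proj (P i j),
      forall i j k, j != k -> P i j * P i k = 0
    & forall i k j, i != k -> P i j * P k j = 0].

Definition magic (n : nat) (P : 'M[A]_n) : Prop :=
  [/\ submagic P,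
      forall i, \sum_(j < n) P i j = 1
    & forall j, \sum_(i < n) P i j = 1].

Definition pairwise_orth_projs (n : nat) (f : 'I_n -> A) : Prop :=
  (forall i, is_proj (f i)) /\ (forall i k, i != k -> f i * f k = 0).
End Magic.

From HB Require Import structures.
From mathcomp Require Import all_boot all_order all_algebra.
From mathcomp Require Import cyclic separable cyclotomic.
From mathcomp Require Import complex reals lra zify.
Import Order.TTheory GRing.Theory Num.Theory.
Local Open Scope ring_scope.
Local Open Scope complex_scope.

(* Reading the new row and column off the unit sums shows that a completion is
   unique if it exists: its new entries are the defects [P_iN], [P_Nj], [P_NN].
   Sums of pairwise orthogonal projections and complements of projections are
   projections, which gives (2) => (4) and (3) => (4).  Conversely, under (4) every
   entry of the completion is a projection and all row and column sums are 1; in a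
   C*-algebra projections summing to 1 are automatically pairwise orthogonal: for
   l <> k the elements e_k e_l e_k are positive and sum to 0, so they vanish, and
   e_l e_k = 0 by the C*-identity.  Positivity is handled through norms only: a
   self-adjoint x with ||1 + x|| <= 1 and ||1 - x|| <= 1 is 0, because averaging
   (1 + z^k x)^n over the (n+1)-st roots of unity z^k isolates n x. *)

Lemma bernoulli_ineq {R : realDomainType} (e : R) (m : nat) :
  0 <= e -> 1 + m%:R * e <= (1 + e) ^+ m.
Proof.
move=> e_ge0; elim: m => [|m IHm]; first by rewrite mul0r addr0 expr0.
rewrite exprS -natr1 mulrDl mul1r.
have := ler_wpM2l (addr_ge0 ler01 e_ge0) IHm.
have : 0 <= e * (m%:R * e) by rewrite !mulr_ge0.
move: (m%:R * e) ((1 + e) ^+ m) => t u; nra.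
Qed.

Lemma natmul_le1_le0 {R : archiRealFieldType} (x : R) :
  (forall n : nat, n%:R * x <= 1) -> x <= 0.
Proof.
move=> hx; rewrite leNgt; apply/negP => x_gt0.
have k_gt : x^-1 < (Num.bound x^-1)%:R by rewrite archi_boundP // invr_ge0 ltW.
have : 1 < (Num.bound x^-1)%:R * x.
  by rewrite -[X in X < _](mulVf (lt0r_neq0 x_gt0)) ltr_pM2r.
by rewrite ltNge hx.
Qed.

Lemma le1_of_pow2_le2 {R : archiRealFieldType} (r : R) :
  (forall k, r ^+ (2 ^ k) <= 2) -> r <= 1.
Proof.
move=> hr; rewrite -subr_le0; apply: natmul_le1_le0 => n.
set x := r - 1; have [x_gt0|x_le0] := ltP 0 x; last first.
  exact: le_trans (mulr_ge0_le0 (ler0n _ n) x_le0) ler01.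
have r1x : r = 1 + x by rewrite /x addrCA subrr addr0.
have n_le : n%:R * x <= (2 ^ n)%:R * x.
  by rewrite ler_wpM2r ?ler_nat ?ltW // ltnW // ltn_expl.
have := bernoulli_ineq x (2 ^ n) (ltW x_gt0); have := hr n; rewrite r1x; lra.
Qed.

Lemma prim_root_exists {C : numClosedFieldType} (n : nat) :
  (0 < n)%N -> exists z : C, n.-primitive_root z.
Proof.
move=> n_gt0; pose p : {poly C} := 'X^n - 1.
have [r Dp] := closed_field_poly_normal p.
rewrite (monicP _) ?monicXnsubC // scale1r in Dp.
have rn1 : all n.-unity_root r by apply/allP=> z; rewrite -root_prod_XsubC -Dp.
have sz_r : (n < (size r).+1)%N by rewrite -(size_prod_XsubC r id) -Dp size_XnsubC.
have [|z] := hasP (has_prim_root n_gt0 rn1 _ sz_r); last by exists z.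
by rewrite -separable_prod_XsubC -Dp separable_Xn_sub_1 // pnatr_eq0 -lt0n.
Qed.

Lemma sum_prim_root_expr {R : idomainType} {m : nat} {z : R} (e : nat) :
  m.-primitive_root z ->
  \sum_(k < m) (z ^+ e) ^+ k = if (m %| e)%N then m%:R else 0.
Proof.
move=> prim_z; rewrite (prim_order_dvd prim_z e); case: eqP => [->|ze_neq1].
  by under eq_bigr do rewrite expr1n; rewrite sumr_const card_ord.
have := subrX1 (z ^+ e) m.
rewrite -exprM mulnC exprM (prim_expr_order prim_z) expr1n subrr => /esym/eqP.
by rewrite mulf_eq0 subr_eq0 => /orP[/eqP|/eqP].
Qed.

(* Discrete Fourier filtering: averaging over the [n.+1]-th roots of unity keeps
   only the binomial term of degree one. *)
Lemma sum_prim_root_exprD1n {F : idomainType} {A : algType F} (x : A) {n : nat} {z : F} :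
  (0 < n)%N -> n.+1.-primitive_root z ->
  \sum_(k < n.+1) (z ^+ k) ^+ n *: (z ^+ k *: x + 1) ^+ n = n.+1%:R *: (x *+ n).
Proof.
move=> n_gt0 prim_z.
under eq_bigr => k _ do rewrite exprD1n scaler_sumr.
rewrite exchange_big /=.
under eq_bigr => j _ do under eq_bigr => k _ do
  rewrite exprZn scalerMnr scalerA -exprD -exprM mulnC exprM.
under eq_bigr => j _ do rewrite -scaler_suml (sum_prim_root_expr _ prim_z).
rewrite (bigD1 (Ordinal (n_gt0 : (1 < n.+1)%N))) //= big1 ?addr0.
  by rewrite addn1 dvdnn expr1 bin1.
move=> j j_neq1; rewrite ifF ?scale0r //; apply/negbTE/negP => /dvdnP[q].
have : val j != 1%N by apply: contra j_neq1 => /eqP j1; apply/eqP/val_inj.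
have := ltn_ord j; case: q => [|[|q]] /=; lia.
Qed.

Lemma exprSD_orth {R : pzRingType} (a b : R) (k : nat) :
  a * b = 0 -> b * a = 0 -> (a + b) ^+ k.+1 = a ^+ k.+1 + b ^+ k.+1.
Proof.
move=> ab ba; elim: k => [|k IHk]; first by rewrite !expr1.
rewrite exprSr IHk mulrDl !mulrDr.
have -> : a ^+ k.+1 * b = 0 by rewrite exprSr -mulrA ab mulr0.
have -> : b ^+ k.+1 * a = 0 by rewrite exprSr -mulrA ba mulr0.
by rewrite addr0 add0r -!exprSr.
Qed.

Lemma mul1DZ {S : comNzRingType} {A : algType S} (a b : S) (x : A) :
  (1 + a *: x) * (1 + b *: x) = 1 + (a + b) *: x + (a * b) *: (x * x).
Proof.
rewrite mulrDr !mulrDl !mul1r mulr1 -scalerAl -scalerAr scalerA scalerDl.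
by rewrite !addrA [a * b]mulrC.
Qed.

Section CstarAlgebra.
Context {R : realType} {A : algType R[i]} {star : A -> A} {nrm : A -> R}.
Hypothesis hA : is_unital_cstar_algebra star nrm.
Implicit Types (x y : A) (c : R[i]).

Lemma nrm_ge0 x : 0 <= nrm x.
Proof. by case: hA. Qed.

Lemma nrm_eq0 x : nrm x = 0 -> x = 0.
Proof. by case: hA => _ [+ _]; apply. Qed.

Lemma nrmD x y : nrm (x + y) <= nrm x + nrm y.
Proof. by case: hA => _ [_ [+ _]]; apply. Qed.

Lemma nrmZ c x : (nrm (c *: x))%:C = `|c| * (nrm x)%:C.
Proof. by case: hA => _ [_ [_ [+ _]]]; apply. Qed.

Lemma nrmM x y : nrm (x * y) <= nrm x * nrm y.
Proof. by case: hA => _ [_ [_ [_ [+ _]]]]; apply. Qed.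

Lemma starD x y : star (x + y) = star x + star y.
Proof. by case: hA => _ [_ [_ [_ [_ [_ [_ [+ _]]]]]]]; apply. Qed.

Lemma starZ c x : star (c *: x) = c^* *: star x.
Proof. by case: hA => _ [_ [_ [_ [_ [_ [_ [_ [+ _]]]]]]]]; apply. Qed.

Lemma starM x y : star (x * y) = star y * star x.
Proof. by case: hA => _ [_ [_ [_ [_ [_ [_ [_ [_ [+ _]]]]]]]]]; apply. Qed.

Lemma star1 : star 1 = 1.
Proof. by case: hA => _ [_ [_ [_ [_ [_ [_ [_ [_ [_ [+ _]]]]]]]]]]. Qed.

Lemma nrm_cstar x : nrm (star x * x) = nrm x ^+ 2.
Proof. by case: hA => _ [_ [_ [_ [_ [_ [_ [_ [_ [_ [_ +]]]]]]]]]]; apply. Qed.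

Lemma star0 : star 0 = 0.
Proof. by apply: (addrI (star 0)); rewrite -starD !addr0. Qed.

Lemma starB x y : star (x - y) = star x - star y.
Proof.
apply: (addIr (star y)); rewrite -starD subrK; apply/eqP.
by rewrite -subr_eq0 -addrA addNr addr0 subrr.
Qed.

Lemma star_sum {I : Type} (r : seq I) (P : pred I) (F : I -> A) :
  star (\sum_(i <- r | P i) F i) = \sum_(i <- r | P i) star (F i).
Proof. by elim/big_rec2: _ => [|i a b _ <-]; rewrite ?star0 ?starD. Qed.

Lemma star_exp x k : star (x ^+ k) = star x ^+ k.
Proof.
elim: k => [|k IHk]; first by rewrite !expr0 star1.
by rewrite exprS starM IHk -exprSr.
Qed.

Lemma nrm0 : nrm 0 = 0.
Proof. by have := nrmZ 0 0; rewrite scale0r normr0 mul0r => -[]. Qed.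

Lemma cstar_eq0 x : star x * x = 0 -> x = 0.
Proof.
move=> xx0; apply: nrm_eq0; apply/eqP.
by rewrite -sqrf_eq0 -nrm_cstar xx0 nrm0.
Qed.

Lemma nrmZ_ge0 (r : R) x : 0 <= r -> nrm (r%:C *: x) = r * nrm x.
Proof.
move=> r_ge0; apply: (@complexI R); rewrite nrmZ rmorphM /=.
by rewrite ger0_norm // lecR.
Qed.

Lemma nrmZ_unit c x : `|c| = 1 -> nrm (c *: x) = nrm x.
Proof. by move=> c1; apply: (@complexI R); rewrite nrmZ c1 mul1r. Qed.

Lemma nrm1 : nrm 1 = 1.
Proof.
have n1_neq0 : nrm 1 != 0 by apply: contraNneq (oner_neq0 A) => /nrm_eq0 ->.
by apply: (mulIf n1_neq0); rewrite mul1r -expr2 -nrm_cstar star1 mul1r.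
Qed.

Lemma nrm_sum {I : Type} (r : seq I) (P : pred I) (F : I -> A) :
  nrm (\sum_(i <- r | P i) F i) <= \sum_(i <- r | P i) nrm (F i).
Proof.
elim/big_rec2: _ => [|i a b _ IH]; first by rewrite nrm0.
by apply: le_trans (nrmD _ _) _; rewrite lerD2l.
Qed.

Lemma nrm_exp_le x k : nrm (x ^+ k) <= nrm x ^+ k.
Proof.
elim: k => [|k IHk]; first by rewrite !expr0 nrm1.
by rewrite !exprS; apply: le_trans (nrmM _ _) _; rewrite ler_wpM2l ?nrm_ge0.
Qed.

Lemma nrm_sa_sqr x : star x = x -> nrm (x * x) = nrm x ^+ 2.
Proof. by move=> sx; rewrite -nrm_cstar sx. Qed.

Lemma nrm_sa_exp2 x k : star x = x -> nrm (x ^+ (2 ^ k)) = nrm x ^+ (2 ^ k).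
Proof.
move=> sx; elim: k => [|k IHk]; first by rewrite !expr1.
by rewrite expnS mulnC !exprM -IHk expr2 nrm_sa_sqr // star_exp sx.
Qed.

Lemma proj_nrm_le1 {p} : is_proj star p -> nrm p <= 1.
Proof.
case=> pp sp; have [->|np_neq0] := eqVneq (nrm p) 0; first exact: ler01.
suff -> : nrm p = 1 by [].
by apply: (mulIf np_neq0); rewrite mul1r -expr2 -nrm_sa_sqr // pp.
Qed.

Lemma proj_compl {p} : is_proj star p -> is_proj star (1 - p).
Proof.
case=> pp sp; split; last by rewrite starB star1 sp.
by rewrite mulrBl mul1r mulrBr mulr1 pp subrr subr0.
Qed.

Lemma sum_orth_proj {n : nat} (f : 'I_n -> A) :
  pairwise_orth_projs star f -> is_proj star (\sum_i f i).
Proof.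
case=> fp orth; split; last by rewrite star_sum; apply: eq_bigr => i _; case: (fp i).
rewrite mulr_suml; apply: eq_bigr => i _.
rewrite mulr_sumr (bigD1 i) //= (fp i).1 big1 ?addr0 // => k ki.
by rewrite orth // eq_sym.
Qed.

(* Through the C*-identity, the norm of a self-adjoint element is read off
   from the norms of its [2 ^ k]-th powers, which for [a + b] are [a ^+ m + b ^+ m]. *)
Lemma nrm_add_orth_le1 a b : star a = a -> star b = b -> a * b = 0 -> b * a = 0 ->
  nrm a <= 1 -> nrm b <= 1 -> nrm (a + b) <= 1.
Proof.
move=> sa sb ab ba na nb; apply: le1_of_pow2_le2 => k.
rewrite -nrm_sa_exp2 ?starD ?sa ?sb //.
have : (0 < 2 ^ k)%N by rewrite expn_gt0.
case: (2 ^ k)%N => // m _; rewrite exprSD_orth //.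
apply: le_trans (nrmD _ _) _; apply: lerD.
- exact: le_trans (nrm_exp_le _ _) (exprn_ile1 _ (nrm_ge0 _) na).
- exact: le_trans (nrm_exp_le _ _) (exprn_ile1 _ (nrm_ge0 _) nb).
Qed.

Lemma nrm_1DunitZ_le1 x : star x = x -> nrm (1 + x) <= 1 -> nrm (1 - x) <= 1 ->
  forall w : R[i], `|w| = 1 -> nrm (1 + w *: x) <= 1.
Proof.
move=> sx n1D n1B w w1.
have ww : w^* * w = 1 by rewrite mulrC -normCK w1 expr1n.
set c := complex.Re w.
have wDw : w^* + w = (2 * c)%:C by rewrite addrC addcJ rmorphM rmorph_nat.
have c_le1 : `|c| <= 1.
  by have := normc_ge_Re w; rewrite w1 -(rmorph1 (real_complex R)) lecR.
set a := (1 + c) / 2; set b := (1 - c) / 2.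
have a_ge0 : 0 <= a by move: c_le1; rewrite ler_norml /a; lra.
have b_ge0 : 0 <= b by move: c_le1; rewrite ler_norml /b; lra.
(* [star (1 + w x) (1 + w x) = 1 + 2 c x + x^2] is a convex combination of
   [(1 + x)^2] and [(1 - x)^2]. *)
have convex_split : star (1 + w *: x) * (1 + w *: x) =
    a%:C *: ((1 + x) * (1 + x)) + b%:C *: ((1 - x) * (1 - x)).
  have -> : 1 + x = 1 + 1 *: x by rewrite scale1r.
  have -> : 1 - x = 1 + (-1) *: x by rewrite scaleN1r.
  rewrite starD star1 starZ sx !mul1DZ ww wDw !scalerDr !scalerA.
  rewrite addrACA [X in _ = X + _]addrACA -!scalerDl -[X in X + _ + _ = _]scale1r.
  congr (_ *: _ + _ *: _ + _ *: _); apply/eqP; rewrite eq_complex /=;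
    apply/andP; split; apply/eqP; rewrite /a /b; simpc; lra.
have : nrm (1 + w *: x) ^+ 2 <= 1.
  rewrite -nrm_cstar convex_split; apply: le_trans (nrmD _ _) _.
  rewrite !nrmZ_ge0 // !nrm_sa_sqr ?starB ?starD ?star1 ?sx //.
  have ab1 : a + b = 1 by rewrite /a /b; lra.
  have := ler_wpM2l a_ge0 (exprn_ile1 2 (nrm_ge0 _) n1D).
  have := ler_wpM2l b_ge0 (exprn_ile1 2 (nrm_ge0 _) n1B).
  lra.
by rewrite expr_le1 ?nrm_ge0.
Qed.

Lemma eq0_of_nrm1D_nrm1B_le1 x : star x = x -> nrm (1 + x) <= 1 -> nrm (1 - x) <= 1 ->
  x = 0.
Proof.
move=> sx n1D n1B; apply: nrm_eq0; apply/le_anti; rewrite nrm_ge0 andbT.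
apply: natmul_le1_le0 => -[|n]; first by rewrite mul0r ler01.
have [z prim_z] := @prim_root_exists R[i] n.+2 isT.
have z_unit k : `|z ^+ k| = 1.
  rewrite normrX; suff -> : `|z| = 1 by rewrite expr1n.
  apply/eqP; rewrite -(pexpr_eq1 (n := n.+2)) // -normrX (prim_expr_order prim_z).
  by rewrite normr1.
have bound : nrm (n.+2%:R *: (x *+ n.+1)) <= n.+2%:R.
  rewrite -(sum_prim_root_exprD1n x (ltn0Sn n) prim_z).
  apply: le_trans (nrm_sum _ _ _) _.
  rewrite -[n.+2 in X in _ <= X]card_ord -sumr_const; apply: ler_sum => k _.
  rewrite nrmZ_unit; last by rewrite normrX z_unit expr1n.
  apply: le_trans (nrm_exp_le _ _) (exprn_ile1 _ (nrm_ge0 _) _).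
  by rewrite addrC nrm_1DunitZ_le1.
move: bound; rewrite -[x *+ _]scaler_nat scalerA -!(rmorph_nat (real_complex R)) -rmorphM.
by rewrite nrmZ_ge0 ?mulr_ge0 // -mulrA -{2}[n.+2%:R]mulr1 ler_pM2l.
Qed.

(* [y] is self-adjoint with spectrum in [[0, 2]]: this norm condition is the only
   form of positivity the argument needs. *)
Definition is_pos_le2 y := star y = y /\ nrm (1 - y) <= 1.

Lemma proj_sandwich_pos_le2 {t p} :
  is_proj star t -> is_proj star p -> is_pos_le2 (t * p * t).
Proof.
move=> ht hp; have [[tt st] [pp sp]] := (ht, hp).
split; first by rewrite !starM st sp mulrA.
have -> : 1 - t * p * t = (1 - t) + t * (1 - p) * t.
  by rewrite mulrBr mulr1 mulrBl tt addrA subrK.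
apply: nrm_add_orth_le1.
- by rewrite starB star1 st.
- by rewrite !starM st starB star1 sp mulrA.
- by rewrite !mulrA mulrBl mul1r tt subrr !mul0r.
- by rewrite -!mulrA mulrBr mulr1 tt subrr !mulr0.
- exact/proj_nrm_le1/proj_compl.
- have t_le1 := proj_nrm_le1 ht.
  have p'_le1 := proj_nrm_le1 (proj_compl hp).
  apply: le_trans (nrmM _ _) (mulr_ile1 (nrm_ge0 _) (nrm_ge0 _) _ t_le1).
  apply: le_trans (nrmM _ _) _; exact: mulr_ile1 (nrm_ge0 _) (nrm_ge0 _) t_le1 p'_le1.
Qed.

(* If the [y l] are positive and sum to [0], then [- y k] is positive as well;
   scaling by [1 / #|P|] puts both [y k] and [- y k] in the unit ball around [1]. *)
Lemma sum_pos_le2_eq0 {I : finType} {P : pred I} {y : I -> A} :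
  (forall l, P l -> is_pos_le2 (y l)) -> \sum_(l | P l) y l = 0 ->
  forall k, P k -> y k = 0.
Proof.
move=> hy sum0 k Pk; set c := #|P|.
have c_gt0 : (0 < c)%N by apply/card_gt0P; exists k.
pose e : R := c%:R^-1.
have e_gt0 : 0 < e by rewrite invr_gt0 ltr0n.
have e_le1 : e <= 1 by rewrite invf_le1 ?ler1n ?ltr0n.
have ec : e * c%:R = 1 by rewrite mulVf // pnatr_eq0 -lt0n.
have [syk nyk] := hy k Pk.
suff : e%:C *: y k = 0 by move/eqP; rewrite scaler_eq0 (negbTE (lt0r_neq0 _)) //= ?ltcR // => /eqP.
apply: eq0_of_nrm1D_nrm1B_le1.
- by rewrite starZ syk geC0_conj // ler0c ltW.
- have sum_compl : \sum_(l | P l && (l != k)) (1 - y l) = c%:R - (1 - y k).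
    apply/eqP; rewrite eq_sym subr_eq addrC -bigD1 //=.
    by rewrite sumrB sum0 subr0 sumr_const.
  have -> : 1 + e%:C *: y k = e%:C *: (1 + \sum_(l | P l && (l != k)) (1 - y l)).
    rewrite sum_compl opprB addrCA [1 + (_ - _)]addrC subrK scalerDr -scaler_nat scalerA.
    by rewrite -(rmorph_nat (real_complex R)) -rmorphM ec scale1r addrC.
  rewrite nrmZ_ge0 ?(ltW e_gt0) // -[X in _ <= X]ec ler_pM2l //.
  apply: le_trans (nrmD _ _) _; rewrite nrm1.
  have : \sum_(l | P l) (1 : R) = c%:R by rewrite sumr_const.
  rewrite (bigD1 k) //= => <-; rewrite lerD2l.
  apply: le_trans (nrm_sum _ _ _) _; apply: ler_sum => l /andP[Pl _].
  by case: (hy l Pl).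
- have -> : 1 - e%:C *: y k = (1 - e)%:C *: 1 + e%:C *: (1 - y k).
    by rewrite scalerBr rmorphB rmorph1 scalerBl scale1r addrA subrK.
  apply: le_trans (nrmD _ _) _.
  rewrite !nrmZ_ge0 ?subr_ge0 ?(ltW e_gt0) // nrm1 mulr1.
  have := ler_wpM2l (ltW e_gt0) nyk; lra.
Qed.

Lemma proj_partition_orth {I : finType} {e : I -> A} :
  (forall i, is_proj star (e i)) -> \sum_i e i = 1 ->
  forall i k, i != k -> e i * e k = 0.
Proof.
move=> ep sum1 i k ik.
have sandwich0 : \sum_(l | l != k) e k * e l * e k = 0.
  have := congr1 (fun s => e k * s * e k) sum1.
  rewrite /= mulr1 (ep k).1 mulr_sumr mulr_suml (bigD1 k) //= !(ep k).1.
  by move=> /(canRL (addKr _)); rewrite addNr.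
have eke_ek := sum_pos_le2_eq0 (fun l _ => proj_sandwich_pos_le2 (ep k) (ep l)) sandwich0 i ik.
apply: cstar_eq0.
by rewrite starM (ep k).2 (ep i).2 mulrA -[e k * e i * e i]mulrA (ep i).1.
Qed.

Lemma magic_of_proj_sums1 (m : nat) (Q : 'M[A]_m) :
  (forall i j, is_proj star (Q i j)) ->
  (forall i, \sum_j Q i j = 1) -> (forall j, \sum_i Q i j = 1) -> magic star Q.
Proof.
move=> Qp rows cols; split=> //; split=> //.
- by move=> i; apply: proj_partition_orth (Qp i) (rows i).
- by move=> i k j; exact: (proj_partition_orth (Qp^~ j) (cols j)).
Qed.

End CstarAlgebra.

Lemma widen_ord_max {n : nat} (le_n_n1 : (n <= n.+1)%N) (i : 'I_n) :
  widen_ord le_n_n1 i = lift ord_max i.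
Proof. by apply: val_inj; rewrite [RHS]lift_max. Qed.

Lemma sum_ord_max_lift (V : nmodType) (n : nat) (F : 'I_n.+1 -> V) :
  \sum_i F i = F ord_max + \sum_(i < n) F (lift ord_max i).
Proof. by rewrite (bigD1_ord ord_max). Qed.

Section Border.
Context {A : nzRingType} (star : A -> A) {n : nat} (P : 'M[A]_n).

Definition row_defect i := 1 - \sum_j P i j.
Definition col_defect j := 1 - \sum_i P i j.
Definition corner_defect := 1 - \sum_i row_defect i.

Definition border : 'M[A]_n.+1 := \matrix_(i, j)
  match unlift ord_max i, unlift ord_max j with
  | Some i', Some j' => P i' j'
  | Some i', None => row_defect i'
  | None, Some j' => col_defect j'
  | None, None => corner_defect
  end.

Lemma sum_row_defect : \sum_i row_defect i = \sum_j col_defect j.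
Proof. by rewrite !sumrB exchange_big. Qed.

Lemma border_lift i j : border (lift ord_max i) (lift ord_max j) = P i j.
Proof. by rewrite mxE !liftK. Qed.

Lemma border_lift_max i : border (lift ord_max i) ord_max = row_defect i.
Proof. by rewrite mxE liftK unlift_none. Qed.

Lemma border_max_lift j : border ord_max (lift ord_max j) = col_defect j.
Proof. by rewrite mxE liftK unlift_none. Qed.

Lemma border_max : border ord_max ord_max = corner_defect.
Proof. by rewrite mxE unlift_none. Qed.

Lemma border_row_sum i : \sum_j border i j = 1.
Proof.
rewrite sum_ord_max_lift; case: (unliftP ord_max i) => [i' ->|->].
  by rewrite border_lift_max; under eq_bigr do rewrite border_lift; rewrite subrK.
by rewrite border_max; under eq_bigr do rewrite border_max_lift; rewrite -sum_row_defect subrK.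
Qed.

Lemma border_col_sum j : \sum_i border i j = 1.
Proof.
rewrite sum_ord_max_lift; case: (unliftP ord_max j) => [j' ->|->].
  by rewrite border_max_lift; under eq_bigr do rewrite border_lift; rewrite subrK.
by rewrite border_max; under eq_bigr do rewrite border_lift_max; rewrite subrK.
Qed.

Lemma border_unique {Q : 'M[A]_n.+1} :
  (forall i, \sum_j Q i j = 1) -> (forall j, \sum_i Q i j = 1) ->
  (forall i j, Q (lift ord_max i) (lift ord_max j) = P i j) -> Q = border.
Proof.
move=> rows cols QP.
have last_entry (a : A) s : a + s = 1 -> a = 1 - s by move<-; rewrite addrK.
have Q_lift_max i : Q (lift ord_max i) ord_max = row_defect i.
  have := rows (lift ord_max i); rewrite sum_ord_max_lift.
  by under eq_bigr do rewrite QP; apply: last_entry.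
have Q_max_lift j : Q ord_max (lift ord_max j) = col_defect j.
  have := cols (lift ord_max j); rewrite sum_ord_max_lift.
  by under eq_bigr do rewrite QP; apply: last_entry.
have Q_max : Q ord_max ord_max = corner_defect.
  have := cols ord_max; rewrite sum_ord_max_lift.
  by under eq_bigr do rewrite Q_lift_max; apply: last_entry.
apply/matrixP => i j.
case: (unliftP ord_max i) => [i' ->|->]; case: (unliftP ord_max j) => [j' ->|->].
- by rewrite QP border_lift.
- by rewrite Q_lift_max border_lift_max.
- by rewrite Q_max_lift border_max_lift.
- by rewrite Q_max border_max.
Qed.

Lemma magic_border_row_defect : magic star border -> pairwise_orth_projs star row_defect.
Proof.
case=> -[Bp _ Bcol] _ _; split=> [i|i k ik]; rewrite -!border_lift_max //.
by apply: Bcol; rewrite (inj_eq lift_inj).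
Qed.

Lemma magic_border_col_defect : magic star border -> pairwise_orth_projs star col_defect.
Proof.
case=> -[Bp Brow _] _ _; split=> [j|j k jk]; rewrite -!border_max_lift //.
by apply: Brow; rewrite (inj_eq lift_inj).
Qed.

Lemma magic_border_corner : magic star border -> is_proj star corner_defect.
Proof. by case=> -[Bp _ _] _ _; rewrite -border_max. Qed.

End Border.

Lemma corner_defectE (A : nzRingType) (n : nat) (P : 'M[A]_n.+1) :
  \sum_i \sum_j P i j - n%:R = corner_defect P.
Proof.
rewrite /corner_defect /row_defect sumrB sumr_const card_ord -natr1 opprB opprD.
by rewrite addrCA [1 + (_ + _)]addrCA subrr addr0.
Qed.

Section CstarBorder.
Context {R : realType} {A : algType R[i]} {star : A -> A} {nrm : A -> R}.
Hypothesis hA : is_unital_cstar_algebra star nrm.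
Context {n : nat} {P : 'M[A]_n}.
Hypothesis hP : submagic star P.

Lemma row_defect_proj i : is_proj star (row_defect P i).
Proof.
have [Pp Prow _] := hP; apply/(proj_compl hA)/(sum_orth_proj hA).
by split=> // j k; apply: Prow.
Qed.

Lemma col_defect_proj j : is_proj star (col_defect P j).
Proof.
have [Pp _ Pcol] := hP; apply/(proj_compl hA)/(sum_orth_proj hA (fun i => P i j)).
by split=> // i k; apply: Pcol.
Qed.

Lemma corner_proj_of_row_defect :
  pairwise_orth_projs star (row_defect P) -> is_proj star (corner_defect P).
Proof. by move/(sum_orth_proj hA)/(proj_compl hA). Qed.

Lemma corner_proj_of_col_defect :
  pairwise_orth_projs star (col_defect P) -> is_proj star (corner_defect P).
Proof. by rewrite /corner_defect sum_row_defect => /(sum_orth_proj hA)/(proj_compl hA). Qed.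

Lemma border_magic : is_proj star (corner_defect P) -> magic star (border P).
Proof.
move=> corner_p; apply: (magic_of_proj_sums1 hA) (border_row_sum P) (border_col_sum P).
move=> i j; rewrite mxE; case: unliftP => [i' _|_]; case: unliftP => [j' _|_] //=.
- by case: hP.
- exact: row_defect_proj.
- exact: col_defect_proj.
Qed.

End CstarBorder.

Theorem proposition3p2 (R : realType) (A : algType R[i]) (star : A -> A) (nrm : A -> R)
  (hA : is_unital_cstar_algebra star nrm)
  (N : nat) (hN : (2 <= N)%N) (P : 'M[A]_(N.-1)) (hP : submagic star P) :
  let completable :=
    exists Q : 'M[A]_N, magic star Q /\
      forall i j : 'I_(N.-1),
        Q (widen_ord (leq_pred N) i) (widen_ord (leq_pred N) j) = P i j in
  let cond2 := pairwise_orth_projs star (fun i : 'I_(N.-1) => 1 - \sum_(j < N.-1) P i j) in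
  let cond3 := pairwise_orth_projs star (fun j : 'I_(N.-1) => 1 - \sum_(i < N.-1) P i j) in
  let cond4 := is_proj star (\sum_(i < N.-1) \sum_(j < N.-1) P i j - (N - 2)%:R) in
  (completable <-> cond2) /\ (completable <-> cond3) /\ (completable <-> cond4).
Proof.
case: N hN P hP => [|[|n]] // _ P hP completable cond2 cond3 cond4.
have complE : completable <-> magic star (border P).
  split=> [[Q [mQ QP]]|mB]; last first.
    by exists (border P); split=> // i j; rewrite !widen_ord_max border_lift.
  have [_ rows cols] := mQ; rewrite -(border_unique P rows cols) // => i j.
  by rewrite -!(widen_ord_max (leq_pred n.+2)) QP.
rewrite /cond4 !subSS subn0 corner_defectE.
have to_magic := border_magic hA hP.
split; [|split]; split=> [/complE|].
- exact: magic_border_row_defect.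
- by move/(corner_proj_of_row_defect hA)/to_magic/complE.
- exact: magic_border_col_defect.
- by move/(corner_proj_of_col_defect hA)/to_magic/complE.
- exact: magic_border_corner.
- by move/to_magic/complE.
Qed.
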